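(* Let $\Gamma\colon\mathbb{R}^d\to\mathbb{R}$ be differentiable with uniformly Lipschitz gradient, let $\varepsilon>0$, and define $\mathcal Y^{\mathrm n}(\theta,\xi)=\frac{1}{\epsilon(\theta)}\Gamma(\theta+\epsilon(\theta)\xi)$ for $\theta\in\mathbb{R}^d$, $\xi\in\mathbb{R}^m$ (here $m=d$). Suppose either (i) $\epsilon(\theta)=\varepsilon\sqrt{1+\|\theta-\theta^{\mathrm{ctr}}\|^2/\sigma_p^2}$ for fixed $\theta^{\mathrm{ctr}}\in\mathbb{R}^d$, $\sigma_p>0$; or (ii) $\epsilon(\theta)=\varepsilon\sqrt{1+\Gamma(\theta)-\Gamma^-}$, where $\Gamma^-$ is a constant with $\Gamma(\theta)\ge\Gamma^-$ for all $\theta$, and there is $\delta>0$ such that $\|\nabla\Gamma(\theta)\|\ge\delta\|\theta\|$ whenever $\|\theta\|\ge\delta^{-1}$. Then for every bounded set $S\subset\mathbb{R}^m$ there is $L<\infty$ such that $|\mathcal Y^{\mathrm n}(\theta',\xi)-\mathcal Y^{\mathrm n}(\theta,\xi)|\le L\|\theta'-\theta\|$ for all $\theta,\theta'\in\mathbb{R}^d$ and all $\xi\in S$.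
   Context: The function $\mathcal Y^{\mathrm n}$ is the normalized observation used in quasi-stochastic gradient descent / extremum seeking control with state-dependent probing gain $\epsilon(\theta)$; the probing signal $\xi$ takes values in a bounded set. *)

From HB Require Import structures.
From mathcomp Require Import all_boot all_order all_algebra.
From mathcomp Require Import all_classical all_reals all_analysis.
Set Implicit Arguments. Unset Strict Implicit. Unset Printing Implicit Defensive.
Import Order.TTheory GRing.Theory Num.Theory.
Import numFieldNormedType.Exports.
Local Open Scope ring_scope.

Definition dotv {R : realType} {d : nat} (u v : 'rV[R]_d) : R :=
  \sum_(i < d) u 0 i * v 0 i.
Definition enorm {R : realType} {d : nat} (v : 'rV[R]_d) : R :=
  Num.sqrt (dotv v v).

Definition gradient {R : realType} {d : nat} (G : 'rV[R]_d -> R)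
  (th : 'rV[R]_d) : 'rV[R]_d :=
  \row_(i < d) ('d G th) (delta_mx 0 i).

Definition Yn {R : realType} {d : nat} (G : 'rV[R]_d -> R) (eps : 'rV[R]_d -> R)
  (th xi : 'rV[R]_d) : R :=
  (eps th)^-1 * G (th + eps th *: xi).

Definition eps_i {R : realType} {d : nat} (veps : R) (thctr : 'rV[R]_d) (sigp : R)
  (th : 'rV[R]_d) : R :=
  veps * Num.sqrt (1 + enorm (th - thctr) ^+ 2 / sigp ^+ 2).

Definition eps_ii {R : realType} {d : nat} (veps : R) (G : 'rV[R]_d -> R) (Gminus : R)
  (th : 'rV[R]_d) : R :=
  veps * Num.sqrt (1 + G th - Gminus).

From HB Require Import structures.
From mathcomp Require Import all_boot all_order all_algebra.
From mathcomp Require Import all_classical all_reals all_analysis.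
From mathcomp Require Import ring lra.
Import Order.TTheory GRing.Theory Num.Theory.
Import numFieldNormedType.Exports.
Local Open Scope ring_scope.

(* Put y = th + eps(th) xi.  Both probing gains are Lipschitz and grow at least
   linearly, c (1 + |th|) <= eps(th).  For gain (ii) this comes from the descent
   lemma: |grad G|^2 <= 4K (G - Gminus), which also makes sqrt (1 + G - Gminus)
   (sqrt K)-Lipschitz.  A Lipschitz gradient makes G grow at most quadratically and
   Lipschitz with constant O(1 + |y|) on balls.  In
     Yn(th') - Yn(th) = (G y' - G y) / eps(th') + G y (eps th - eps th') / (eps th eps th'),
   assuming |th| <= |th'|, the linear growth of eps absorbs both growth rates. *)

Section EuclideanNorm.
Context {R : realType} {d : nat}.
Implicit Types (u v w : 'rV[R]_d).

Lemma dotvC u v : dotv u v = dotv v u.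
Proof. by apply: eq_bigr => i _; rewrite mulrC. Qed.

Lemma dotvDl u v w : dotv (u + v) w = dotv u w + dotv v w.
Proof. by rewrite /dotv -big_split; apply: eq_bigr => i _; rewrite mxE mulrDl. Qed.

Lemma dotvZl a u w : dotv (a *: u) w = a * dotv u w.
Proof. by rewrite /dotv mulr_sumr; apply: eq_bigr => i _; rewrite mxE mulrA. Qed.

Lemma dotvNl u w : dotv (- u) w = - dotv u w.
Proof. by rewrite -scaleN1r dotvZl mulN1r. Qed.

Lemma dotvDr u v w : dotv w (u + v) = dotv w u + dotv w v.
Proof. by rewrite !(dotvC w) dotvDl. Qed.

Lemma dotvZr a u w : dotv w (a *: u) = a * dotv w u.
Proof. by rewrite !(dotvC w) dotvZl. Qed.

Lemma dotvNr u w : dotv w (- u) = - dotv w u.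
Proof. by rewrite !(dotvC w) dotvNl. Qed.

Lemma dotvv_ge0 u : 0 <= dotv u u.
Proof. by apply: sumr_ge0 => i _; rewrite -expr2 sqr_ge0. Qed.

Lemma dotvv_eq0 u w : dotv u u = 0 -> dotv u w = 0.
Proof.
move=> /eqP; rewrite psumr_eq0 => [/allP u0|i _]; last by rewrite -expr2 sqr_ge0.
apply: big1 => i _; have /implyP/(_ isT) := u0 i (mem_index_enum i).
by rewrite mulf_eq0 orbb => /eqP ->; rewrite mul0r.
Qed.

Lemma cauchy_schwarz u v : dotv u v ^+ 2 <= dotv u u * dotv v v.
Proof.
have := dotvv_ge0 (dotv v v *: u - dotv u v *: v).
rewrite !(dotvDl, dotvNl, dotvZl, dotvDr, dotvNr, dotvZr) (dotvC v u).
set a := dotv u u; set b := dotv u v; set c := dotv v v => H.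
have [c_gt0 | c_lt0 | c0] := ltrgt0P c.
- have : 0 <= c * (a * c - b ^+ 2) by nra.
  by rewrite pmulr_rge0 // subr_ge0 => ?; nra.
- by have := dotvv_ge0 v; rewrite -/c; lra.
- have b0 : b = 0 by rewrite /b dotvC; apply: dotvv_eq0.
  by rewrite b0 c0 expr2 !mulr0.
Qed.

Lemma enorm_ge0 u : 0 <= enorm u.
Proof. exact: sqrtr_ge0. Qed.

Lemma enorm_sqr u : enorm u ^+ 2 = dotv u u.
Proof. by rewrite sqr_sqrtr // dotvv_ge0. Qed.

Lemma normr_dotv_le u v : `|dotv u v| <= enorm u * enorm v.
Proof.
rewrite -(ler_pXn2r (_ : (0 < 2)%N)) ?nnegrE ?mulr_ge0 ?enorm_ge0 //.
by rewrite real_normK ?num_real // exprMn !enorm_sqr cauchy_schwarz.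
Qed.

Lemma enormD u v : enorm (u + v) <= enorm u + enorm v.
Proof.
rewrite -(ler_pXn2r (_ : (0 < 2)%N)) ?nnegrE ?addr_ge0 ?enorm_ge0 //.
rewrite enorm_sqr !(dotvDl, dotvDr) (dotvC v u) sqrrD !enorm_sqr.
have := normr_dotv_le u v; have := ler_norm (dotv u v); lra.
Qed.

Lemma enormZ a u : enorm (a *: u) = `|a| * enorm u.
Proof.
rewrite /enorm dotvZl dotvZr mulrA -expr2 sqrtrM ?sqr_ge0 //.
by rewrite sqrtr_sqr.
Qed.

Lemma enormN u : enorm (- u) = enorm u.
Proof. by rewrite -scaleN1r enormZ normrN1 mul1r. Qed.

Lemma enorm0 : enorm (0 : 'rV[R]_d) = 0.
Proof. by rewrite -(scale0r 0) enormZ normr0 mul0r. Qed.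

Lemma enorm_distC u v : enorm (u - v) = enorm (v - u).
Proof. by rewrite -enormN opprB. Qed.

Lemma enorm_le_dist u v : enorm v <= enorm u + enorm (v - u).
Proof. by have := enormD u (v - u); rewrite subrKC. Qed.

End EuclideanNorm.

Section GradientCalculus.
Context {R : realType} {d : nat}.
Implicit Types (x y v : 'rV[R]_d).

Lemma diff_gradient (G : 'rV[R]_d -> R) x v : 'd G x v = dotv (gradient G x) v.
Proof.
rewrite {1}(row_sum_delta v) linear_sum /dotv.
by apply: eq_bigr => i _; rewrite linearZ /= mxE mulrC.
Qed.

Lemma is_derive_along_line (G : 'rV[R]_d -> R) x v (t : R) :
  differentiable G (x + t *: v) ->
  is_derive t 1 (fun s : R => G (x + s *: v)) ('d G (x + t *: v) v).
Proof.
move=> dG.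
have quotE : (fun h : R => h^-1 *: (G (x + (h *: 1 + t) *: v) - G (x + t *: v))) =
             (fun h : R => h^-1 *: (G (h *: v + (x + t *: v)) - G (x + t *: v))).
  by apply/funext => h; rewrite scaler1 scalerDl addrCA addrA addrC.
apply: DeriveDef; first by rewrite /derivable /= quotE; exact: diff_derivable.
by rewrite /derive /= quotE -/(derive G (x + t *: v) v) deriveE.
Qed.

Lemma gradient_mvt (G : 'rV[R]_d -> R) x v : (forall y, differentiable G y) ->
  exists2 c : R, 0 <= c <= 1 & G (x + v) - G x = dotv (gradient G (x + c *: v)) v.
Proof.
move=> dG; pose f (s : R) := G (x + s *: v).
have f_derive (s : R) : is_derive s (1 : R) f ('d G (x + s *: v) v).
  exact: is_derive_along_line.
have f_cont : continuous f.
  by move=> s; have [/derivable1_diffP/differentiable_continuous] := f_derive s.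
have [c c01 fE] := MVT_segment ler01 (fun s _ => f_derive s) (continuous_subspaceT f_cont).
exists c; first by move: c01; rewrite in_itv.
by move: fE; rewrite /f scale0r addr0 scale1r subr0 mulr1 diff_gradient.
Qed.

Context {G : 'rV[R]_d -> R} {K : R}.
Hypothesis G_diff : forall x, differentiable G x.
Hypothesis K_ge0 : 0 <= K.
Hypothesis gradient_lip : forall x y,
  enorm (gradient G y - gradient G x) <= K * enorm (y - x).

Lemma gradient_lip_segment x v (c : R) : 0 <= c <= 1 ->
  enorm (gradient G (x + c *: v) - gradient G x) <= K * enorm v.
Proof.
move=> /andP[c_ge0 c_le1]; apply: le_trans (gradient_lip _ _) _.
rewrite addrC addKr enormZ ger0_norm // ler_wpM2l //.
by rewrite ler_piMl ?enorm_ge0.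
Qed.

Lemma increment_le x y :
  `|G y - G x| <= (enorm (gradient G x) + K * enorm (y - x)) * enorm (y - x).
Proof.
have [c c01] := gradient_mvt G x (y - x) G_diff; rewrite subrKC => ->.
apply: le_trans (normr_dotv_le _ _) _; rewrite ler_wpM2r ?enorm_ge0 //.
apply: le_trans (enorm_le_dist (gradient G x) _) _.
by rewrite lerD2l gradient_lip_segment.
Qed.

Lemma increment_le_origin y y' : `|G y' - G y| <=
  (enorm (gradient G 0) + K * enorm y + K * enorm (y' - y)) * enorm (y' - y).
Proof.
apply: le_trans (increment_le y y') _; rewrite ler_wpM2r ?enorm_ge0 // lerD2r.
apply: le_trans (enorm_le_dist (gradient G 0) _) _.
by have := gradient_lip 0 y; rewrite subr0 lerD2l.
Qed.

Lemma descent_lemma x v : G (x + v) - G x <= dotv (gradient G x) v + K * enorm v ^+ 2.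
Proof.
have [c c01 ->] := gradient_mvt G x v G_diff.
rewrite -[gradient G (x + c *: v)](addrNK (gradient G x)) dotvDl addrC lerD2l.
apply: le_trans (ler_norm _) _; apply: le_trans (normr_dotv_le _ _) _.
by rewrite expr2 mulrA ler_wpM2r ?enorm_ge0 ?gradient_lip_segment.
Qed.

(* One descent step of length 1/(2K) from x stays above the infimum. *)
Lemma gradient_sqr_le (Gmin : R) : 0 < K -> (forall x, Gmin <= G x) ->
  forall x, enorm (gradient G x) ^+ 2 <= 4 * K * (G x - Gmin).
Proof.
move=> K_gt0 G_ge x; set g := gradient G x.
have := descent_lemma x (- (2 * K)^-1 *: g).
rewrite dotvZr enormZ normrN gtr0_norm ?invr_gt0 ?mulr_gt0 // -enorm_sqr.
have := G_ge (x - (2 * K)^-1 *: g); rewrite scaleNr.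
set n := enorm g ^+ 2 => ge_min step.
have stepE : - (2 * K)^-1 * n + K * ((2 * K)^-1 * enorm g) ^+ 2 = - (n / (4 * K)).
  by rewrite exprMn -/n; field; rewrite gt_eqF.
rewrite stepE in step.
by rewrite mulrC -ler_pdivrMr ?mulr_gt0 //; lra.
Qed.

End GradientCalculus.

Section NormalizedObservation.
Context {R : realType} {d : nat}.
Implicit Types (x y : 'rV[R]_d).
Context {G eps : 'rV[R]_d -> R} {A K Le c M : R}.
Hypotheses (A_ge0 : 0 <= A) (K_ge0 : 0 <= K) (Le_ge0 : 0 <= Le) (c_gt0 : 0 < c).
Hypothesis M_ge0 : 0 <= M.
Hypothesis eps_lip : forall x y, `|eps y - eps x| <= Le * enorm (y - x).
Hypothesis eps_ge_linear : forall x, c * (1 + enorm x) <= eps x.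
Hypothesis G_increment : forall y y',
  `|G y' - G y| <= (A + K * enorm y + K * enorm (y' - y)) * enorm (y' - y).

Let Cy : R := 1 + (eps 0 + Le) * M.
Let CG : R := `|G 0| + A + K.

Lemma eps_gt0 x : 0 < eps x.
Proof.
apply: lt_le_trans (eps_ge_linear x); rewrite mulr_gt0 //.
by rewrite ltr_pwDl ?enorm_ge0.
Qed.

Lemma eps_le x : eps x <= eps 0 + Le * enorm x.
Proof.
have := eps_lip 0 x; rewrite subr0 => lip.
by have := ler_norm (eps x - eps 0); lra.
Qed.

Lemma G_quadratic_bound y B : 1 <= B -> enorm y <= B -> `|G y| <= CG * B ^+ 2.
Proof.
move=> B_ge1 yB; have := G_increment 0 y; rewrite enorm0 mulr0 addr0 subr0 => incr.
have y0 := enorm_ge0 y; have G00 := normr_ge0 (G 0).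
have := ler_normD (G y - G 0) (G 0); rewrite subrK.
have : (A + K * enorm y) * enorm y <= (A + K * B) * B by apply: ler_pM; rewrite ?addr_ge0 ?mulr_ge0 ?lerD2l ?ler_wpM2l.
have B_le_sqr : B <= B ^+ 2 by nra.
have := ler_wpM2l G00 (le_trans B_ge1 B_le_sqr); have := ler_wpM2l A_ge0 B_le_sqr.
rewrite /CG; nra.
Qed.

Lemma G_lip_on_ball y y' B : enorm y <= B -> enorm y' <= B ->
  `|G y' - G y| <= (A + 3 * K * B) * enorm (y' - y).
Proof.
move=> yB y'B; apply: le_trans (G_increment y y') _.
rewrite ler_wpM2r ?enorm_ge0 //.
have : enorm (y' - y) <= 2 * B by have := enormD y' (- y); rewrite enormN; lra.
move/(ler_wpM2l K_ge0); have := ler_wpM2l K_ge0 yB; lra.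
Qed.

Lemma Cy_ge1 : 1 <= Cy.
Proof. by rewrite /Cy lerDl mulr_ge0 ?addr_ge0 ?(ltW (eps_gt0 0)). Qed.

Lemma probe_point_le x xi : enorm xi <= M ->
  enorm (x + eps x *: xi) <= Cy * (1 + enorm x).
Proof.
move=> xiM; apply: le_trans (enormD _ _) _; rewrite enormZ gtr0_norm ?eps_gt0 //.
have : eps x * enorm xi <= (eps 0 + Le * enorm x) * M.
  by apply: ler_pM; rewrite ?eps_le ?enorm_ge0 ?(ltW (eps_gt0 x)).
have e0M := mulr_ge0 (ltW (eps_gt0 0)) M_ge0.
have := mulr_ge0 e0M (enorm_ge0 x); have := mulr_ge0 Le_ge0 M_ge0; rewrite /Cy; nra.
Qed.

Lemma probe_point_lip x x' xi : enorm xi <= M ->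
  enorm ((x' + eps x' *: xi) - (x + eps x *: xi)) <= (1 + Le * M) * enorm (x' - x).
Proof.
move=> xiM; rewrite opprD addrACA -scalerBl.
apply: le_trans (enormD _ _) _; rewrite enormZ.
have : `|eps x' - eps x| * enorm xi <= Le * enorm (x' - x) * M.
  by apply: ler_pM; rewrite ?normr_ge0 ?enorm_ge0.
have := enorm_ge0 (x' - x); nra.
Qed.

Lemma Yn_sub x x' xi : Yn G eps x' xi - Yn G eps x xi =
  (G (x' + eps x' *: xi) - G (x + eps x *: xi)) / eps x' +
  G (x + eps x *: xi) * (eps x - eps x') / (eps x * eps x').
Proof. by rewrite /Yn; field; rewrite !gt_eqF ?eps_gt0. Qed.

Lemma Yn_increment_term x x' xi : enorm xi <= M -> enorm x <= enorm x' ->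
  `|(G (x' + eps x' *: xi) - G (x + eps x *: xi)) / eps x'| <=
  (A + 3 * K * Cy) * (1 + Le * M) / c * enorm (x' - x).
Proof.
move=> xiM le_x; have Cy_ge0 := le_trans ler01 Cy_ge1.
have b_ge0 := enorm_ge0 x'; set b := enorm x' in le_x b_ge0 *.
have y_le : enorm (x + eps x *: xi) <= Cy * (1 + b).
  by apply: le_trans (probe_point_le x xi xiM) _; rewrite ler_wpM2l ?lerD2l.
have G_lip := G_lip_on_ball _ _ _ y_le (probe_point_le x' xi xiM).
have coef : A + 3 * K * (Cy * (1 + b)) <= (A + 3 * K * Cy) * (1 + b).
  by have := mulr_ge0 A_ge0 b_ge0; lra.
have coef_ge0 : 0 <= A + 3 * K * (Cy * (1 + b)).
  by rewrite addr_ge0 // !mulr_ge0 // addr_ge0.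
rewrite normrM normfV (gtr0_norm (eps_gt0 x')) ler_pdivrMr ?eps_gt0 //.
apply: le_trans G_lip _; apply: le_trans (ler_pM coef_ge0 (enorm_ge0 _) coef
  (probe_point_lip x x' xi xiM)) _.
have -> : (A + 3 * K * Cy) * (1 + b) * ((1 + Le * M) * enorm (x' - x)) =
    (A + 3 * K * Cy) * (1 + Le * M) / c * enorm (x' - x) * (c * (1 + b)).
  by field; rewrite gt_eqF.
apply: ler_wpM2l (eps_ge_linear x').
by rewrite !mulr_ge0 ?enorm_ge0 ?addr_ge0 ?mulr_ge0 ?invr_ge0 ?(ltW c_gt0).
Qed.

Lemma Yn_gain_term x x' xi : enorm xi <= M -> enorm x <= enorm x' ->
  `|G (x + eps x *: xi) * (eps x - eps x') / (eps x * eps x')| <=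
  CG * Cy ^+ 2 * Le / c ^+ 2 * enorm (x' - x).
Proof.
move=> xiM le_x; have ee_gt0 := mulr_gt0 (eps_gt0 x) (eps_gt0 x').
have a_ge0 := enorm_ge0 x; have b_ge0 := enorm_ge0 x'; have D_ge0 := enorm_ge0 (x' - x).
set a := enorm x in le_x a_ge0 *; set b := enorm x' in le_x b_ge0 *.
set D := enorm (x' - x) in D_ge0 *.
have Gy : `|G (x + eps x *: xi)| <= CG * (Cy * (1 + a)) ^+ 2.
  by apply: G_quadratic_bound (probe_point_le x xi xiM); rewrite mulr_ege1 ?Cy_ge1 ?lerDl.
have CG_ge0 : 0 <= CG by rewrite /CG !addr_ge0.
rewrite normrM normfV normrM distrC (gtr0_norm ee_gt0) ler_pdivrMr //.
apply: le_trans (ler_pM (normr_ge0 _) (normr_ge0 _) Gy (eps_lip x x')) _.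
have CGCyLe_ge0 := mulr_ge0 (mulr_ge0 CG_ge0 (sqr_ge0 Cy)) Le_ge0.
have Q_ge0 := mulr_ge0 (mulr_ge0 CGCyLe_ge0 D_ge0) (addr_ge0 ler01 a_ge0).
have -> : CG * (Cy * (1 + a)) ^+ 2 * (Le * D) = CG * Cy ^+ 2 * Le * D * (1 + a) * (1 + a).
  by ring.
apply: le_trans (ler_wpM2l Q_ge0 (_ : 1 + a <= 1 + b)) _; first by rewrite lerD2l.
have -> : CG * Cy ^+ 2 * Le * D * (1 + a) * (1 + b) =
    CG * Cy ^+ 2 * Le / c ^+ 2 * D * (c * (1 + a) * (c * (1 + b))).
  by field; rewrite gt_eqF.
have ca_ge0 : 0 <= c * (1 + a) by rewrite mulr_ge0 ?addr_ge0 ?(ltW c_gt0).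
have cb_ge0 : 0 <= c * (1 + b) by rewrite mulr_ge0 ?addr_ge0 ?(ltW c_gt0).
apply: ler_wpM2l (ler_pM ca_ge0 cb_ge0 (eps_ge_linear x) (eps_ge_linear x')).
by rewrite mulr_ge0 // mulr_ge0 ?invr_ge0 ?sqr_ge0.
Qed.

Lemma Yn_lipschitz : exists L : R, forall th th' xi, enorm xi <= M ->
  `|Yn G eps th' xi - Yn G eps th xi| <= L * enorm (th' - th).
Proof.
exists ((A + 3 * K * Cy) * (1 + Le * M) / c + CG * Cy ^+ 2 * Le / c ^+ 2).
move=> th th' xi xiM.
wlog le_th : th th' / enorm th <= enorm th'.
  move=> le_wlog; have [/le_wlog//|/ltW/le_wlog] := leP (enorm th) (enorm th').
  by rewrite distrC enorm_distC.
rewrite Yn_sub; apply: le_trans (ler_normD _ _) _; rewrite [leRHS]mulrDl.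
by apply: lerD; [exact: Yn_increment_term | exact: Yn_gain_term].
Qed.

End NormalizedObservation.

Section ProbingGains.
Context {R : realType} {d : nat}.
Implicit Types (x y : 'rV[R]_d).

Lemma sqrtr_le_add (h h' t : R) : 0 <= t -> h' <= (Num.sqrt h + t) ^+ 2 ->
  Num.sqrt h' <= Num.sqrt h + t.
Proof.
move=> t_ge0 /ler_wsqrtr /le_trans; apply.
by rewrite sqrtr_sqr ger0_norm // addr_ge0 ?sqrtr_ge0.
Qed.

Lemma scale_lipschitz (s : 'rV[R]_d -> R) (k L : R) : 0 <= k ->
  (forall x y, s y <= s x + L * enorm (y - x)) ->
  forall x y, `|k * s y - k * s x| <= k * L * enorm (y - x).
Proof.
move=> k_ge0 s_le x y; rewrite -mulrBr normrM ger0_norm // -mulrA ler_wpM2l //.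
have := s_le x y; have := s_le y x; rewrite enorm_distC ler_norml; lra.
Qed.

Lemma sqrt1Dsqr_ge1 (p : R) : 1 <= Num.sqrt (1 + p ^+ 2).
Proof. by rewrite -[leLHS]sqrtr1 ler_wsqrtr // lerDl sqr_ge0. Qed.

Lemma sqrt1Dsqr_ge_norm (p : R) : `|p| <= Num.sqrt (1 + p ^+ 2).
Proof. by rewrite -sqrtr_sqr ler_wsqrtr // lerDr. Qed.

Lemma sqrt1Dsqr_le (p q t : R) : 0 <= p -> 0 <= t -> q <= p + t -> 0 <= q ->
  1 + q ^+ 2 <= (Num.sqrt (1 + p ^+ 2) + t) ^+ 2.
Proof.
move=> p_ge0 t_ge0 q_le q_ge0.
have := sqr_sqrtr (addr_ge0 ler01 (sqr_ge0 p)).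
have := sqrt1Dsqr_ge_norm p; rewrite ger0_norm //; nra.
Qed.

Lemma eps_i_lipschitz (veps sg : R) (ctr : 'rV[R]_d) : 0 < veps -> 0 < sg ->
  forall x y, `|eps_i veps ctr sg y - eps_i veps ctr sg x| <= veps * sg^-1 * enorm (y - x).
Proof.
move=> veps_gt0 sg_gt0; apply: scale_lipschitz (ltW veps_gt0) _ => x y.
rewrite -!expr_div_n; apply: sqrtr_le_add; first by rewrite mulr_ge0 ?invr_ge0 ?enorm_ge0 ?(ltW sg_gt0).
apply: sqrt1Dsqr_le; rewrite ?divr_ge0 ?mulr_ge0 ?invr_ge0 ?enorm_ge0 ?(ltW sg_gt0) //.
rewrite [sg^-1 * _]mulrC -mulrDl ler_wpM2r ?invr_ge0 ?(ltW sg_gt0) //.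
by have := enorm_le_dist (x - ctr) (y - ctr); rewrite opprB addrA subrK.
Qed.

Lemma eps_i_ge_linear (veps sg : R) (ctr : 'rV[R]_d) : 0 < veps -> 0 < sg ->
  forall x, veps * (1 + enorm ctr + sg)^-1 * (1 + enorm x) <= eps_i veps ctr sg x.
Proof.
move=> veps_gt0 sg_gt0 x; rewrite /eps_i -mulrA ler_pM2l //.
rewrite -expr_div_n; set p := enorm (x - ctr) / sg.
have p_ge0 : 0 <= p by rewrite divr_ge0 ?enorm_ge0 ?ltW.
have s_ge1 := sqrt1Dsqr_ge1 p.
have := sqrt1Dsqr_ge_norm p; rewrite ger0_norm // => p_le_s.
have x_le : enorm x <= enorm ctr + sg * p.
  by rewrite /p mulrC divfK ?gt_eqF //; have := enorm_le_dist ctr x.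
have ctr_ge0 := enorm_ge0 ctr.
rewrite mulrC ler_pdivrMr; last by lra.
nra.
Qed.

Lemma coercive_gain_lower (dl K s a : R) : 0 < dl -> 0 <= K -> 1 <= s -> 0 <= a ->
  (dl^-1 <= a -> (dl * a) ^+ 2 <= 4 * K * s ^+ 2) ->
  dl / (1 + dl + K) * (1 + a) <= s.
Proof.
move=> dl_gt0 K_ge0 s_ge1 a_ge0 far_sqr.
rewrite mulrAC ler_pdivrMr; last by lra.
suff : dl * a <= (1 + K) * s by nra.
have [/far_sqr sqr_le | a_lt] := leP dl^-1 a.
  have s_ge0 := le_trans ler01 s_ge1.
  rewrite -ler_sqr ?nnegrE ?mulr_ge0 ?addr_ge0 ?(ltW dl_gt0) //.
  by have := sqr_ge0 ((1 - K) * s); lra.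
have : dl * a <= 1 by rewrite -(divff (lt0r_neq0 dl_gt0)) ler_wpM2l ?ltW.
nra.
Qed.

Section GradientGain.
Context {G : 'rV[R]_d -> R} {K Gmin veps : R}.
Hypothesis G_diff : forall x, differentiable G x.
Hypothesis K_gt0 : 0 < K.
Hypothesis gradient_lip : forall x y,
  enorm (gradient G y - gradient G x) <= K * enorm (y - x).
Hypothesis G_ge : forall x, Gmin <= G x.
Hypothesis veps_gt0 : 0 < veps.

Lemma gradient_sqr_le_gain x :
  enorm (gradient G x) ^+ 2 <= 4 * K * (1 + G x - Gmin).
Proof.
apply: le_trans (gradient_sqr_le G_diff (ltW K_gt0) gradient_lip _ K_gt0 G_ge x) _.
by rewrite ler_wpM2l ?mulr_ge0 ?(ltW K_gt0) // lerD2r lerDr.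
Qed.

Lemma eps_ii_lipschitz x y :
  `|eps_ii veps G Gmin y - eps_ii veps G Gmin x| <= veps * Num.sqrt K * enorm (y - x).
Proof.
move: x y; apply: scale_lipschitz (ltW veps_gt0) _ => x y.
apply: sqrtr_le_add; first by rewrite mulr_ge0 ?sqrtr_ge0 ?enorm_ge0.
have h_ge1 : 1 <= 1 + G x - Gmin by have := G_ge x; lra.
have grad_sqr := gradient_sqr_le_gain x.
have incr := increment_le G_diff (ltW K_gt0) gradient_lip x y.
set g := enorm (gradient G x) in grad_sqr incr *; set n := enorm (y - x) in incr *.
have g_ge0 : 0 <= g := enorm_ge0 _; have n_ge0 : 0 <= n := enorm_ge0 _.
clearbody g n.
(* Bounding [g] by the gain itself makes [1 + G y - Gmin] at most the perfect
   square [(sqrt (1 + G x - Gmin) + sqrt K * n)^2]. *)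
have g_le : g <= 2 * Num.sqrt K * Num.sqrt (1 + G x - Gmin).
  have : g ^+ 2 <= (2 * Num.sqrt K * Num.sqrt (1 + G x - Gmin)) ^+ 2.
    apply: le_trans grad_sqr _.
    by rewrite !exprMn (sqr_sqrtr (ltW K_gt0)) (sqr_sqrtr (le_trans ler01 h_ge1)) -natrX.
  by rewrite ler_sqr ?nnegrE ?mulr_ge0 ?sqrtr_ge0.
have := ler_norm (G y - G x).
have := sqr_sqrtr (ltW K_gt0); have := sqr_sqrtr (le_trans ler01 h_ge1).
have := ler_wpM2r n_ge0 g_le; nra.
Qed.

Lemma eps_ii_ge_linear (dl : R) : 0 < dl ->
  (forall x, dl^-1 <= enorm x -> dl * enorm x <= enorm (gradient G x)) ->
  forall x, veps * (dl / (1 + dl + K)) * (1 + enorm x) <= eps_ii veps G Gmin x.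
Proof.
move=> dl_gt0 grad_ge x; rewrite /eps_ii -mulrA ler_pM2l //.
have h_ge1 : 1 <= 1 + G x - Gmin by have := G_ge x; lra.
apply: coercive_gain_lower; rewrite ?enorm_ge0 ?(ltW K_gt0) //.
  by rewrite -[leLHS]sqrtr1 ler_wsqrtr.
move=> /grad_ge far; rewrite sqr_sqrtr ?(le_trans ler01 h_ge1) //.
apply: le_trans (gradient_sqr_le_gain x).
by rewrite ler_sqr ?nnegrE ?mulr_ge0 ?enorm_ge0 ?(ltW dl_gt0).
Qed.

End GradientGain.
End ProbingGains.

Theorem proposition3p1 (R : realType) (d : nat) (G : 'rV[R]_d -> R)
  (veps : R) (eps : 'rV[R]_d -> R) :
  (forall th : 'rV[R]_d, differentiable G th) ->
  (exists K : R, forall th th' : 'rV[R]_d,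
      enorm (gradient G th' - gradient G th) <= K * enorm (th' - th)) ->
  0 < veps ->
  ((exists (thctr : 'rV[R]_d) (sigp : R), 0 < sigp /\ eps = eps_i veps thctr sigp)
   \/
   (exists Gminus : R,
      (forall th, Gminus <= G th) /\
      (exists delta : R, 0 < delta /\
         forall th : 'rV[R]_d, delta^-1 <= enorm th ->
           delta * enorm th <= enorm (gradient G th)) /\
      eps = eps_ii veps G Gminus)) ->
  forall S : set 'rV[R]_d,
    (exists M : R, forall xi, S xi -> enorm xi <= M) ->
    exists L : R, forall (th th' xi : 'rV[R]_d), S xi ->
      `|Yn G eps th' xi - Yn G eps th xi| <= L * enorm (th' - th).
Proof.
move=> G_diff [K0 gradient_lip0] veps_gt0 gain S [M S_bounded].
pose K := `|K0| + 1.
have K_gt0 : 0 < K by rewrite ltr_pwDr.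
have gradient_lip x y : enorm (gradient G y - gradient G x) <= K * enorm (y - x).
  apply: le_trans (gradient_lip0 x y) _.
  by rewrite ler_wpM2r ?enorm_ge0 // (le_trans (ler_norm K0)) ?lerDl.
suff [Le [c [Le_ge0 c_gt0 eps_lip eps_ge]]] : exists Le c : R, [/\ 0 <= Le, 0 < c,
    forall x y, `|eps y - eps x| <= Le * enorm (y - x) &
    forall x, c * (1 + enorm x) <= eps x].
  have [L YnL] := Yn_lipschitz (enorm_ge0 (gradient G 0)) (ltW K_gt0) Le_ge0 c_gt0
    (normr_ge0 M) eps_lip eps_ge (increment_le_origin G_diff (ltW K_gt0) gradient_lip).
  by exists L => th th' xi /S_bounded /le_trans/(_ (ler_norm M)); apply: YnL.
case: gain => [[ctr [sg [sg_gt0 epsE]]] | [Gmin [G_ge [[dl [dl_gt0 grad_ge]] epsE]]]];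
  subst eps.
  exists (veps * sg^-1), (veps * (1 + enorm ctr + sg)^-1); split.
  - by rewrite mulr_ge0 ?invr_ge0 ?ltW.
  - by rewrite mulr_gt0 // invr_gt0; have := enorm_ge0 ctr; lra.
  - exact: eps_i_lipschitz.
  - exact: eps_i_ge_linear.
exists (veps * Num.sqrt K), (veps * (dl / (1 + dl + K))); split.
- by rewrite mulr_ge0 ?sqrtr_ge0 ?ltW.
- by rewrite !mulr_gt0 // invr_gt0; lra.
- exact: eps_ii_lipschitz.
- exact: eps_ii_ge_linear.
Qed.
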